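(* Let $(V,c)$ be a network satisfying the Yang-type inequality with constant $C_{YT}$. Let $\Omega\subset V$ be finite with Dirichlet eigenvalues $\lambda_1\le\cdots\le\lambda_{|\Omega|}$. If $\lambda_k\le1+C_{YT}$ for some $1\le k<|\Omega|$, then $$\lambda_{k+1}-\lambda_k\le C_{YT}\,\frac{\sum_{i=1}^k(\lambda_i-\lambda_{\min})}{\sum_{i=1}^k(1-\lambda_i)}.$$
   Context: A network is a pair $(V,c)$ with $V$ countable and $c:V\times V\to[0,\infty)$ symmetric with $\pi(x)=\sum_yc(x,y)<\infty$; $P(x,y)=c(x,y)/\pi(x)$ and $\Delta f(x)=\sum_yP(x,y)(f(x)-f(y))$, a bounded self-adjoint operator on $L^2(V,\pi)$ (inner product $\sum_x\pi(x)f(x)\overline{g(x)}$) with spectrum in $[0,2]$; $\lambda_{\min}$ is the bottom of its spectrum. For finite $\Omega\subset V$, the Dirichlet eigenvalues $\lambda_1\le\cdots\le\lambda_{|\Omega|}$ of $\Omega$ are the eigenvalues (with multiplicity) of the compression $\Delta_\Omega f=\mathbf 1_\Omega\cdot\Delta f$ on functions vanishing outside $\Omega$. The network satisfies the Yang-type inequality with constant $C_{YT}$ if for every finite $\Omega\subset V$ and every $k<|\Omega|$: $\sum_{i=1}^k(\lambda_{k+1}-\lambda_i)^2(1-\lambda_i)\le C_{YT}\sum_{i=1}^k(\lambda_{k+1}-\lambda_i)(\lambda_i-\lambda_{\min})$. *)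

From HB Require Import structures.
From mathcomp Require Import all_boot all_order all_algebra.
From mathcomp Require Import finmap.
From mathcomp Require Import all_classical all_reals.
From mathcomp Require Import esum.
Set Implicit Arguments. Unset Strict Implicit. Unset Printing Implicit Defensive.
Import Order.TTheory GRing.Theory Num.Theory.
Local Open Scope ring_scope.

Section Network.
Variables (R : realType) (V : countType) (c : V -> V -> R).

(** A network: c symmetric, nonnegative, with finite weighted degrees
    pi(x) = sum_y c(x,y) < oo (and pi(x) > 0 so that P is defined). *)
Definition is_network : Prop :=
  [/\ forall x y, c x y = c y x,
      forall x y, 0 <= c x y,
      forall x, (\esum_(y in [set: V]) (c x y)%:E < +oo)%E &
      forall x, 0 < fine (\esum_(y in [set: V]) (c x y)%:E)].

Definition pi (x : V) : R := fine (\esum_(y in [set: V]) (c x y)%:E).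

Definition P (x y : V) : R := c x y / pi x.

(** Matrix of the Dirichlet compression Delta_Omega, in the basis of the
    indicators of the points of Omega (enumerated by enum_fset Omega):
    for f vanishing outside Omega and x in Omega,
    Delta f(x) = f(x) * sum_y P(x,y) - sum_{y in Omega} P(x,y) f(y)
               = f(x) - sum_{y in Omega} P(x,y) f(y)   (since sum_y P(x,y) = 1). *)
Definition dirichlet_matrix (Om : {fset V}) : 'M[R]_(size (enum_fset Om)) :=
  let pt i := tnth (in_tuple (enum_fset Om)) i in
  \matrix_(i, j) ((i == j)%:R - P (pt i) (pt j)).

(** lam is the list of Dirichlet eigenvalues lambda_1 <= ... <= lambda_|Om|
    of Om, with multiplicity: lam is sorted and is the multiset of roots of
    the characteristic polynomial of Delta_Om. (lam`_i is lambda_(i+1).) *)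
Definition dirichlet_eigenvalues (Om : {fset V}) (lam : seq R) : Prop :=
  sorted <=%R lam /\
  char_poly (dirichlet_matrix Om) = \prod_(l <- lam) ('X - l%:P).

Definition energy (S : {fset V}) (f : V -> R) : R :=
  \sum_(x <- enum_fset S)
     pi x * f x * (f x - \sum_(y <- enum_fset S) P x y * f y).
Definition norm2 (S : {fset V}) (f : V -> R) : R :=
  \sum_(x <- enum_fset S) pi x * f x ^+ 2.

(** Bottom of the spectrum of Delta on L^2(V,pi): infimum of the Rayleigh
    quotient <Delta f,f>/<f,f> over nonzero finitely supported f (a dense
    subspace of L^2(V,pi); Delta is bounded and self-adjoint). *)
Definition lambda_min : R :=
  inf [set r : R | exists (S : {fset V}) (f : V -> R),
         [/\ forall x, x \notin S -> f x = 0,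
             exists2 x, x \in S & f x != 0 &
             r = energy S f / norm2 S f]].

Definition yang_type (C : R) : Prop :=
  forall (Om : {fset V}) (lam : seq R), dirichlet_eigenvalues Om lam ->
  forall k : nat, (k < #|` Om|)%N ->
    \sum_(i < k) (lam`_k - lam`_i) ^+ 2 * (1 - lam`_i)
      <= C * \sum_(i < k) (lam`_k - lam`_i) * (lam`_i - lambda_min).

End Network.

From Pilot Require Import Defs.
From HB Require Import structures.
From mathcomp Require Import all_boot all_order all_algebra.
From mathcomp Require Import finmap.
From mathcomp Require Import all_classical all_reals.
From mathcomp Require Import esum ring lra.
Import Order.TTheory GRing.Theory Num.Theory.
Local Open Scope ring_scope.
Set Implicit Arguments. Unset Strict Implicit.

(* For C_YT >= 0, put x_i = lambda_(k+1) - lambda_i and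
   h_i = x_i (1 - lambda_i) - C_YT (lambda_i - lambda_min) for i <= k. Both are
   nonincreasing in i (for h because lambda_k <= 1 + C_YT), and the Yang-type
   inequality says sum x_i h_i <= 0; Chebyshev's sum inequality turns this into
   sum h_i <= 0, i.e. sum x_i (1 - lambda_i) <= C_YT sum (lambda_i - lambda_min),
   and a second use of Chebyshev bounds the left-hand side from below by
   (lambda_(k+1) - lambda_k) sum (1 - lambda_i). The denominator cannot be
   negative since the trace of Delta_Omega is at most |Omega|, and when it
   vanishes the same bound forces lambda_k = lambda_(k+1). That lambda_i >=
   lambda_min holds because Dirichlet eigenfunctions are admissible in the
   Rayleigh quotient.
   For C_YT < 0, the Yang-type inequality on a two-point set {x, y} with
   c(x, y) > 0 would fail, so the network has no edges, Delta_Omega = 0, all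
   lambda_i vanish and the claim reduces to lambda_min >= 0. *)
Lemma chebyshev_sum (R : realFieldType) (k : nat) (a b : nat -> R) :
  (forall i j, (i <= j)%N -> (j < k)%N -> a j <= a i) ->
  (forall i j, (i <= j)%N -> (j < k)%N -> b j <= b i) ->
  (\sum_(i < k) a i) * (\sum_(i < k) b i) <= k%:R * \sum_(i < k) a i * b i.
Proof.
move=> a_dec b_dec.
have : 0 <= \sum_(i < k) \sum_(j < k) (a i - a j) * (b i - b j).
  apply: sumr_ge0 => i _; apply: sumr_ge0 => j _.
  have [ij | ji] := leqP i j; first by rewrite mulr_ge0 // subr_ge0 ?a_dec ?b_dec.
  by rewrite mulr_le0 // subr_le0 ?a_dec ?b_dec // ltnW.
rewrite (_ : \sum_(i < k) _ = \sum_(i < k) \sum_(j < k) (a i * b i + a j * b j)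
                           - \sum_(i < k) \sum_(j < k) (a i * b j + a j * b i)); last first.
  rewrite -sumrB; apply: eq_bigr => i _; rewrite -sumrB.
  by apply: eq_bigr => j _; ring.
under eq_bigr do rewrite big_split /= sumr_const card_ord.
under [X in _ - X]eq_bigr do rewrite big_split /= -mulr_sumr -mulr_suml.
rewrite !big_split /= -mulr_suml -mulr_sumr.
by rewrite sumrMnl sumr_const card_ord mulr_natl subr_ge0 -!mulr2n lerMn2r.
Qed.

Section YangGap.
Variables (R : realFieldType) (l : seq R) (k : nat) (C m : R).
Hypotheses (l_sorted : sorted <=%R l) (k_gt0 : (0 < k)%N) (k_lt_size : (k < size l)%N).

Let nth_le i j : (i <= j)%N -> (j < size l)%N -> l`_i <= l`_j.
Proof.
move=> ij jl; apply: (sorted_leq_nth le_trans lexx 0 l_sorted) => //.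
by rewrite inE (leq_ltn_trans ij).
Qed.

Let nth_le_pred i : (i < k)%N -> l`_i <= l`_k.-1.
Proof.
move=> ik; apply: nth_le; first by rewrite -ltnS prednK.
exact: leq_ltn_trans (leq_pred k) k_lt_size.
Qed.

Let nth_le_head i j : (i <= j)%N -> (j < k)%N -> l`_i <= l`_j.
Proof. by move=> ij jk; apply: nth_le ij (ltn_trans jk k_lt_size). Qed.

Let one_sub_dec i j : (i <= j)%N -> (j < k)%N -> 1 - l`_j <= 1 - l`_i.
Proof. by move=> ij jk; rewrite lerD2l lerN2 nth_le_head. Qed.

Let k_gt0R : 0 < k%:R :> R.
Proof. by rewrite ltr0n. Qed.

Let pred_le : l`_k.-1 <= l`_k.
Proof. exact: nth_le (leq_pred k) k_lt_size. Qed.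

Lemma sum_sub1_le0_eq0 :
  \sum_(i < size l) l`_i <= (size l)%:R -> \sum_(i < k) (1 - l`_i) <= 0 ->
  \sum_(i < k) (1 - l`_i) = 0 /\ l`_k = l`_k.-1.
Proof.
move=> trace_le.
rewrite sumrB sumr_const card_ord subr_le0 => k_le_head.
set head := \sum_(i < k) l`_i in k_le_head *.
have head_le : head <= k%:R * l`_k.-1.
  rewrite mulr_natl -[X in _ *+ X]card_ord -sumr_const.
  by apply: ler_sum => i _; apply: nth_le_pred.
have tail_ge : (size l - k)%:R * l`_k <= \sum_(k <= i < size l) l`_i.
  rewrite mulr_natl -sumr_const_nat.
  by apply: ler_sum_nat => i /andP[ki il]; apply: nth_le.
have split_sum : \sum_(i < size l) l`_i = head + \sum_(k <= i < size l) l`_i.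
  rewrite /head -!(big_mkord xpredT (fun i => l`_i)).
  by rewrite (@big_cat_nat _ _ _ k) // ltnW.
have nkR : 0 < (size l - k)%:R :> R by rewrite ltr0n subn_gt0.
have pred_ge1 : 1 <= l`_k.-1 by rewrite -(ler_pM2l k_gt0R) mulr1 (le_trans k_le_head).
have k_le1 : l`_k <= 1.
  rewrite -(ler_pM2l nkR) mulr1; apply: le_trans tail_ge _.
  rewrite natrB 1?ltnW //; lra.
have pred_eq1 : l`_k.-1 = 1 by apply/le_anti; rewrite pred_ge1 (le_trans pred_le).
split; last by apply/le_anti; rewrite pred_le pred_eq1 k_le1.
by apply/eqP; rewrite subr_eq0 eq_le k_le_head (le_trans head_le) // pred_eq1 mulr1.
Qed.

Lemma gap_mul_sum_le :
  0 <= \sum_(i < k) (1 - l`_i) ->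
  (l`_k - l`_k.-1) * \sum_(i < k) (1 - l`_i) <= \sum_(i < k) (l`_k - l`_i) * (1 - l`_i).
Proof.
move=> sum_ge0.
pose y i := l`_k.-1 - l`_i.
have y_dec i j : (i <= j)%N -> (j < k)%N -> y j <= y i.
  by move=> ij jk; rewrite lerD2l lerN2 nth_le_head.
have sum_y_ge0 : 0 <= \sum_(i < k) y i.
  by apply: sumr_ge0 => i _; rewrite subr_ge0 nth_le_pred.
have : 0 <= \sum_(i < k) y i * (1 - l`_i).
  rewrite -(pmulr_rge0 _ k_gt0R).
  exact: le_trans (mulr_ge0 sum_y_ge0 sum_ge0) (chebyshev_sum y_dec one_sub_dec).
have -> : \sum_(i < k) (l`_k - l`_i) * (1 - l`_i) =
    (l`_k - l`_k.-1) * \sum_(i < k) (1 - l`_i) + \sum_(i < k) y i * (1 - l`_i).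
  by rewrite mulr_sumr -big_split; apply: eq_bigr => i _ /=; rewrite /y; ring.
by rewrite lerDl.
Qed.

Lemma yang_sum_le :
  l`_k.-1 <= 1 + C -> l`_k.-1 < l`_k ->
  \sum_(i < k) (l`_k - l`_i) ^+ 2 * (1 - l`_i)
    <= C * \sum_(i < k) (l`_k - l`_i) * (l`_i - m) ->
  \sum_(i < k) (l`_k - l`_i) * (1 - l`_i) <= C * \sum_(i < k) (l`_i - m).
Proof.
move=> pred_le1C gap_gt0 yang.
pose x i := l`_k - l`_i.
pose h i := x i * (1 - l`_i) - C * (l`_i - m).
have x_dec i j : (i <= j)%N -> (j < k)%N -> x j <= x i.
  by move=> ij jk; rewrite lerD2l lerN2 nth_le_head.
have h_dec i j : (i <= j)%N -> (j < k)%N -> h j <= h i.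
  move=> ij jk; have := nth_le_head ij jk; have := nth_le_pred jk.
  have -> : h j = h i - (l`_j - l`_i) * (1 + C + l`_k - l`_i - l`_j).
    by rewrite /h /x; ring.
  move=> j_le_pred i_le_j; rewrite lerBlDr lerDl mulr_ge0 //; lra.
have sum_x_gt0 : 0 < \sum_(i < k) x i.
  have : 0 < \sum_(i < k) (l`_k - l`_k.-1).
    by rewrite sumr_const card_ord pmulrn_lgt0 // subr_gt0.
  move/lt_le_trans; apply; apply: ler_sum => i _.
  by rewrite lerD2l lerN2 nth_le_pred.
have sum_xh_le0 : \sum_(i < k) x i * h i <= 0.
  rewrite (_ : \sum_(i < k) x i * h i = \sum_(i < k) (l`_k - l`_i) ^+ 2 * (1 - l`_i)
               - C * \sum_(i < k) (l`_k - l`_i) * (l`_i - m)); first by rewrite subr_le0.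
  by rewrite mulr_sumr -sumrB; apply: eq_bigr => i _; rewrite /h /x; ring.
have : \sum_(i < k) h i <= 0.
  rewrite -(pmulr_rle0 _ sum_x_gt0); apply: le_trans (chebyshev_sum x_dec h_dec) _.
  by rewrite pmulr_rle0 ?ltr0n.
by rewrite /h sumrB -mulr_sumr subr_le0.
Qed.

Theorem yang_gap_bound :
  (forall i, (i < k)%N -> m <= l`_i) ->
  \sum_(i < size l) l`_i <= (size l)%:R ->
  0 <= C -> l`_k.-1 <= 1 + C ->
  \sum_(i < k) (l`_k - l`_i) ^+ 2 * (1 - l`_i)
    <= C * \sum_(i < k) (l`_k - l`_i) * (l`_i - m) ->
  l`_k - l`_k.-1 <= C * (\sum_(i < k) (l`_i - m)) / (\sum_(i < k) (1 - l`_i)).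
Proof.
move=> m_le trace_le C_ge0 pred_le1C yang.
(* a vanishing denominator is harmless: x / 0 = 0 and the gap is then 0 *)
have [sum_gt0 | sum_le0] := ltP 0 (\sum_(i < k) (1 - l`_i)); last first.
  by have [-> ->] := sum_sub1_le0_eq0 trace_le sum_le0; rewrite subrr invr0 mulr0.
rewrite ler_pdivlMr //.
have [gap_gt0 | gap_le0] := ltP l`_k.-1 l`_k.
  exact: le_trans (gap_mul_sum_le (ltW sum_gt0)) (yang_sum_le pred_le1C gap_gt0 yang).
have -> : l`_k - l`_k.-1 = 0 by apply/eqP; rewrite subr_eq0 eq_le gap_le0 pred_le.
by rewrite mul0r mulr_ge0 // sumr_ge0 // => i _; rewrite subr_ge0 m_le.
Qed.

End YangGap.

Lemma char_poly_sum_roots (R : comNzRingType) n (A : 'M[R]_n) (s : seq R) :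
  char_poly A = \prod_(x <- s) ('X - x%:P) -> \sum_(x <- s) x = \tr A.
Proof.
move=> charA; have size_s : size s = n.
  by have := size_char_poly A; rewrite charA size_prod_XsubC => -[].
case: n => [|n] in A charA size_s *.
  by rewrite (size0nil size_s) big_nil /mxtrace big_ord0.
apply: oppr_inj; rewrite -char_poly_trace // -coefPn_prod_XsubC ?size_s //.
by rewrite charA.
Qed.

Lemma char_poly0_root (R : fieldType) n (l : R) :
  root (char_poly (0 : 'M[R]_n)) l -> l = 0.
Proof.
rewrite -eigenvalue_root_char => /eigenvalueP [v]; rewrite mulmx0.
by move=> /esym /eqP; rewrite scaler_eq0 => /orP [/eqP -> | /eqP ->]; rewrite ?eqxx.
Qed.

Lemma mxtrace_mx2 (R : comNzRingType) (M : 'M[R]_2) : \tr M = M 0 0 + M 1 1.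
Proof.
rewrite /mxtrace !big_ord_recl big_ord0 addr0.
by have -> : lift ord0 (ord0 : 'I_1) = 1 :> 'I_2 by apply/val_inj.
Qed.

Lemma det_mx2 (R : comNzRingType) (M : 'M[R]_2) :
  \det M = M 0 0 * M 1 1 - M 0 1 * M 1 0.
Proof.
rewrite (expand_det_row _ 0) !big_ord_recl big_ord0 /cofactor !det_mx11 !mxE /=.
have -> : lift (0 : 'I_2) (0 : 'I_1) = 1 by apply/val_inj.
have -> : lift (1 : 'I_2) (0 : 'I_1) = 0 by apply/val_inj.
by rewrite /bump /= expr0 expr1; ring.
Qed.

Lemma char_poly_mx2 (R : comNzRingType) (M : 'M[R]_2) (u v : R) :
  u + v = \tr M -> u * v = \det M ->
  char_poly M = \prod_(x <- [:: u; v]) ('X - x%:P).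
Proof.
move=> tr_uv det_uv; apply/polyP => -[|[|[|i]]].
- rewrite char_poly_det coef0_prod_XsubC !big_cons big_nil mulr1 -det_uv.
  by rewrite expr2 mulrNN mul1r.
- rewrite (coefPn_prod_XsubC (ps := [:: u; v])) // (char_poly_trace M) //.
  by rewrite !big_cons big_nil addr0 tr_uv.
- have := monicP (char_poly_monic M); have := monicP (monic_prod_XsubC [:: u; v] xpredT id).
  by rewrite /lead_coef size_char_poly size_prod_XsubC => -> ->.
- by rewrite !nth_default ?size_char_poly ?size_prod_XsubC.
Qed.

Lemma char_poly_size2 (R : comNzRingType) n (M : 'M[R]_n) (i j : 'I_n) (u v : R) :
  n = 2 -> i != j -> u + v = M i i + M j j ->
  u * v = M i i * M j j - M i j * M j i ->
  char_poly M = \prod_(x <- [:: u; v]) ('X - x%:P).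
Proof.
move=> n2; subst n.
have ord2 (k : 'I_2) : k = 0 \/ k = 1.
  by case: k => -[|[|//]] ?; [left | right]; apply/val_inj.
case: (ord2 i) (ord2 j) => -> [] -> // _ tr_uv det_uv; apply: char_poly_mx2;
  by rewrite ?mxtrace_mx2 ?det_mx2 ?tr_uv ?det_uv; ring.
Qed.

Lemma quadratic_roots (R : rcfType) (p q r s : R) : 0 < q * r ->
  exists u v, [/\ u < v, u < p, u + v = p + s & u * v = p * s - q * r].
Proof.
move=> qr_gt0; set D := (p - s) ^+ 2 + 4 * (q * r).
have D_gt : (p - s) ^+ 2 < D by rewrite ltrDl mulr_gt0.
have D_gt0 : 0 < D by apply: le_lt_trans D_gt; rewrite sqr_ge0.
set t := Num.sqrt D.
have /andP [t_gt1 t_gt2] : - t < p - s < t.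
  by rewrite -ltr_norml -sqrtr_sqr ltr_sqrt.
have t2 : t ^+ 2 = D by rewrite sqr_sqrtr ?ltW.
exists ((p + s - t) / 2), ((p + s + t) / 2); split.
- by rewrite ltr_pM2r ?invr_gt0 //; lra.
- by rewrite ltr_pdivrMr //; lra.
- by field.
- have -> : (p + s - t) / 2 * ((p + s + t) / 2) = ((p + s) ^+ 2 - t ^+ 2) / 4.
    by field.
  by rewrite t2 /D; field.
Qed.

Section Network.
Variables (R : realType) (V : countType) (c : V -> V -> R).
Hypothesis net : is_network c.

Lemma pi_esum x : ((Defs.pi c x)%:E = \esum_(y in [set: V]) (c x y)%:E)%E.
Proof.
case: net => _ c_ge0 esum_fin _; rewrite /Defs.pi fineK // ge0_fin_numE //.
by apply: esum_ge0 => y _; rewrite lee_fin.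
Qed.

Lemma sum_le_pi x (s : seq V) : uniq s -> \sum_(y <- s) c x y <= Defs.pi c x.
Proof.
move=> s_uniq; rewrite -lee_fin pi_esum -sumEFin.
apply: esum_ge; exists [set` s]%classic; first by split => //; exact: finite_seq.
by rewrite fsbig_seq.
Qed.

Lemma pi_gt0 x : 0 < Defs.pi c x.
Proof. by case: net => _ _ _ pi_pos; exact: pi_pos. Qed.

Lemma pi_neq0 x : Defs.pi c x != 0.
Proof. by rewrite gt_eqF ?pi_gt0. Qed.

Lemma mul_pi_P x y : Defs.pi c x * P c x y = c x y.
Proof. by rewrite /Defs.P mulrC mulfVK ?pi_neq0. Qed.

Lemma P_ge0 x y : 0 <= P c x y.
Proof. by case: net => _ c_ge0 _ _; rewrite divr_ge0 ?c_ge0 // ltW ?pi_gt0. Qed.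

Lemma pi_isolated x : (forall y, y != x -> c x y = 0) -> Defs.pi c x = c x x.
Proof.
move=> no_edge; apply/eqP; rewrite -(@eqe R) pi_esum.
have c_ge0 y : (0 <= (c x y)%:E)%E by case: net => _ c_ge0 _ _; rewrite lee_fin.
rewrite (esumID [set x]) //= setTI esum_set1 // esum1 ?adde0 //.
by move=> y [_ /eqP yx]; rewrite no_edge.
Qed.

Lemma energy_ge0 S f : 0 <= energy c S f.
Proof.
have [c_sym c_ge0 _ _] := net; set s := enum_fset S.
pose g x y := c x y * (f x ^+ 2 - f x * f y).
have energyE : energy c S f =
    \sum_(x <- s) (Defs.pi c x * f x ^+ 2 - \sum_(y <- s) c x y * f x * f y).
  apply: eq_bigr => x _; rewrite mulrBr mulr_sumr; congr (_ - _); first by ring.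
  by apply: eq_bigr => y _; rewrite -(mul_pi_P x y); ring.
have g_le : \sum_(x <- s) \sum_(y <- s) g x y <= energy c S f.
  rewrite energyE; apply: ler_sum => x _.
  rewrite [X in X <= _](_ : _ = (\sum_(y <- s) c x y) * f x ^+ 2
                               - \sum_(y <- s) c x y * f x * f y).
    by rewrite lerD2r ler_wpM2r ?sqr_ge0 ?sum_le_pi ?fset_uniq.
  by rewrite mulr_suml -sumrB; apply: eq_bigr => y _; rewrite /g; ring.
have g_sym : 2 * \sum_(x <- s) \sum_(y <- s) g x y =
    \sum_(x <- s) \sum_(y <- s) c x y * (f x - f y) ^+ 2.
  rewrite mulr2n mulrDl mul1r [X in _ + X]exchange_big -big_split /=.
  apply: eq_bigr => x _; rewrite -big_split /=; apply: eq_bigr => y _.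
  by rewrite /g (c_sym y x); ring.
apply: le_trans g_le; rewrite -(pmulr_rge0 _ (ltr0Sn R 1)) g_sym.
apply: sumr_ge0 => x _; apply/sumr_ge0 => y _.
by rewrite mulr_ge0 ?sqr_ge0.
Qed.

Lemma norm2_gt0 S f x : x \in S -> f x != 0 -> 0 < norm2 c S f.
Proof.
move=> xS fx; rewrite /norm2 (big_rem x) //=.
have fx2_gt0 : 0 < f x ^+ 2 by rewrite exprn_even_gt0 // fx orbT.
apply: ltr_pwDl (mulr_gt0 (pi_gt0 x) fx2_gt0) (sumr_ge0 _ _) => y _.
by rewrite mulr_ge0 ?sqr_ge0 ?ltW ?pi_gt0.
Qed.

Lemma rayleigh_ge0 S f x : x \in S -> f x != 0 -> 0 <= energy c S f / norm2 c S f.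
Proof. by move=> xS fx; rewrite divr_ge0 ?energy_ge0 ?ltW ?(norm2_gt0 xS fx). Qed.

Lemma lambda_min_ge0 : 0 <= lambda_min c.
Proof.
rewrite /lambda_min; set E := (X in inf X).
have E_ge0 r : E r -> 0 <= r by move=> [S [f [_ [x xS fx] ->]]]; exact: rayleigh_ge0 xS fx.
have [[r Er] | E0] := pselect (E !=set0)%classic.
  exact: lb_le_inf (ex_intro _ r Er) E_ge0.
suff -> : E = set0 by rewrite inf0.
by apply/seteqP; split => // r Er; apply: E0; exists r.
Qed.

Lemma lambda_min_le S f x :
  (forall y, y \notin S -> f y = 0) -> x \in S -> f x != 0 ->
  lambda_min c <= energy c S f / norm2 c S f.
Proof.
move=> f_out xS fx; apply: ge_inf; last by exists S, f; split => //; exists x.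
by exists 0 => r [S' [f' [_ [x' xS' fx'] ->]]]; exact: rayleigh_ge0 xS' fx'.
Qed.

Local Notation pt Om := (tnth (in_tuple (enum_fset Om))).

Lemma pt_inj (Om : {fset V}) : injective (pt Om).
Proof. by apply/tuple_uniqP; exact: fset_uniq. Qed.

Lemma energy_eigenfunction S f l :
  (forall x, x \in S -> \sum_(y <- enum_fset S) P c x y * f y = (1 - l) * f x) ->
  energy c S f = l * norm2 c S f.
Proof.
move=> f_eig; rewrite /energy /norm2 mulr_sumr !big_seq.
by apply: eq_bigr => x xS; rewrite f_eig //; ring.
Qed.

Lemma dirichlet_left_eigen Om (v : 'rV_(size (enum_fset Om))) l :
  v *m dirichlet_matrix c Om = l *: v ->
  forall j, \sum_i v 0 i * P c (pt Om i) (pt Om j) = (1 - l) * v 0 j.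
Proof.
move=> v_eig j; have := congr1 (fun M : 'rV_(size (enum_fset Om)) => M 0 j) v_eig.
rewrite !mxE; under eq_bigr => i _ do rewrite mxE mulrBr.
rewrite sumrB (bigD1 j) //= eqxx mulr1 big1 ?addr0 => [eig_j|i /negbTE ->]; last first.
  by rewrite mulr0.
by rewrite mulrBl mul1r -eig_j opprB addrC subrK.
Qed.

Lemma dirichlet_eigenvalue_ge_lambda_min Om l :
  root (char_poly (dirichlet_matrix c Om)) l -> lambda_min c <= l.
Proof.
have [c_sym _ _ _] := net.
rewrite -eigenvalue_root_char => /eigenvalueP [v v_eig v_neq0].
(* As pi(x) P(x,y) = c(x,y) is symmetric, a left eigenvector v gives the eigenfunction v / pi. *)
pose f x := \sum_i (pt Om i == x)%:R * (v 0 i / Defs.pi c (pt Om i)).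
have f_pt j : f (pt Om j) = v 0 j / Defs.pi c (pt Om j).
  rewrite /f (bigD1 j) //= eqxx mul1r big1 ?addr0 // => i ij.
  by rewrite (inj_eq (@pt_inj Om)) (negbTE ij) mul0r.
have f_out x : x \notin Om -> f x = 0.
  move=> xOm; rewrite /f big1 // => i _; case: eqP => [pt_i | _]; last by rewrite mul0r.
  by move: xOm; rewrite -pt_i mem_tnth.
have f_eig x : x \in Om ->
    \sum_(y <- enum_fset Om) P c x y * f y = (1 - l) * f x.
  move=> /(tnthP (in_tuple _)) [j ->]; rewrite big_tnth f_pt mulrA.
  rewrite -(dirichlet_left_eigen v_eig j) mulr_suml; apply: eq_bigr => i _.
  by rewrite f_pt /Defs.P (c_sym (pt Om j)); ring.
have [j vj_neq0] : exists j, v 0 j != 0.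
  apply/existsP; apply: contraR v_neq0 => /existsPn v0.
  by apply/eqP/rowP => j; rewrite mxE; apply/eqP/negPn/v0.
have fj_neq0 : f (pt Om j) != 0 by rewrite f_pt mulf_neq0 ?invr_eq0 ?pi_neq0.
have ptj_in : pt Om j \in Om by rewrite mem_tnth.
apply: le_trans (lambda_min_le f_out ptj_in fj_neq0) _.
by rewrite (energy_eigenfunction f_eig) mulfK // gt_eqF // (norm2_gt0 ptj_in).
Qed.

Lemma dirichlet_eigenvalues_size Om lam :
  dirichlet_eigenvalues c Om lam -> size lam = #|` Om|.
Proof.
case=> _ charE; have := size_char_poly (dirichlet_matrix c Om).
by rewrite charE size_prod_XsubC => -[].
Qed.

Lemma dirichlet_eigenvalues_root Om lam l :
  dirichlet_eigenvalues c Om lam -> l \in lam ->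
  root (char_poly (dirichlet_matrix c Om)) l.
Proof. by case=> _ ->; rewrite root_prod_XsubC. Qed.

Lemma dirichlet_trace_le Om : \tr (dirichlet_matrix c Om) <= #|` Om|%:R.
Proof.
rewrite -[X in _ <= X%:R]card_ord -sumr_const; apply: ler_sum => i _.
by rewrite mxE eqxx lerBlDr lerDl P_ge0.
Qed.

Lemma dirichlet_eigenvalues_sum_le Om lam : dirichlet_eigenvalues c Om lam ->
  \sum_(i < size lam) lam`_i <= (size lam)%:R.
Proof.
move=> eig; rewrite -(big_mkord xpredT (fun i => lam`_i)) -(big_nth 0 xpredT id).
rewrite (char_poly_sum_roots eig.2) (dirichlet_eigenvalues_size eig).
exact: dirichlet_trace_le.
Qed.

Lemma two_point_eigenvalues x y : x != y -> 0 < c x y ->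
  exists u v, [/\ dirichlet_eigenvalues c [fset x; y]%fset [:: u; v], u < v & u < 1].
Proof.
have [c_sym _ _ _] := net; move=> xy cxy_gt0; set Om := [fset x; y]%fset.
have size2 : size (enum_fset Om) = 2 by have := cardfs2 x y; rewrite xy.
have lt02 : (0 < size (enum_fset Om))%N by rewrite size2.
have lt12 : (1 < size (enum_fset Om))%N by rewrite size2.
pose i0 := Ordinal lt02; pose i1 := Ordinal lt12.
have i01 : i0 != i1 by [].
set M := dirichlet_matrix c Om.
have c01_gt0 : 0 < c (pt Om i0) (pt Om i1).
  have pt_xy i : pt Om i = x \/ pt Om i = y.
    by have := mem_tnth i (in_tuple (enum_fset Om)); rewrite !inE => /orP[] /eqP; auto.
  have : pt Om i0 != pt Om i1 by rewrite (inj_eq (@pt_inj Om)).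
  by case: (pt_xy i0) (pt_xy i1) => -> [] ->; rewrite ?eqxx // c_sym.
have M01_gt0 : 0 < M i0 i1 * M i1 i0.
  rewrite !mxE (negbTE i01) eq_sym (negbTE i01) !sub0r mulrNN /Defs.P (c_sym (pt Om i1)).
  by rewrite !mulr_gt0 ?invr_gt0 ?pi_gt0.
have [u [v [uv u_lt tr_uv det_uv]]] := quadratic_roots (M i0 i0) (M i1 i1) M01_gt0.
exists u, v; split => //.
  by split; [rewrite /= andbT ltW | exact: char_poly_size2 size2 i01 tr_uv det_uv].
by apply: lt_le_trans u_lt _; rewrite mxE eqxx lerBlDr lerDl P_ge0.
Qed.

Lemma yang_type_edge_gt0 C x y : yang_type c C -> x != y -> 0 < c x y -> 0 < C.
Proof.
move=> yang xy cxy_gt0; have [u [v [eig uv u_lt1]]] := two_point_eigenvalues xy cxy_gt0.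
have card2 : (1 < #|` [fset x; y]%fset|)%N by rewrite cardfs2 xy.
have := yang _ _ eig 1 card2; rewrite /= !big_ord1 /=.
have u_ge : lambda_min c <= u.
  exact/dirichlet_eigenvalue_ge_lambda_min/(dirichlet_eigenvalues_root eig)/mem_head.
move=> yang_uv; rewrite ltNge; apply/negP => C_le0.
have : C * ((v - u) * (u - lambda_min c)) <= 0.
  by rewrite mulr_le0_ge0 // mulr_ge0 // subr_ge0 // ltW.
have : 0 < (v - u) ^+ 2 * (1 - u) by rewrite mulr_gt0 ?exprn_gt0 // subr_gt0.
lra.
Qed.

Lemma yang_type_nonpos_dirichlet_matrix0 C Om :
  yang_type c C -> C <= 0 -> dirichlet_matrix c Om = 0.
Proof.
move=> yang C_le0; have [_ c_ge0 _ _] := net.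
have no_edge x y : x != y -> c x y = 0.
  move=> xy; apply/eqP; rewrite eq_le c_ge0 andbT leNgt; apply/negP => cxy_gt0.
  by have := yang_type_edge_gt0 yang xy cxy_gt0; rewrite ltNge C_le0.
have P_E x y : P c x y = (x == y)%:R.
  have pi_x : Defs.pi c x = c x x.
    by apply: pi_isolated => // z zx; rewrite no_edge // eq_sym.
  rewrite /Defs.P; case: eqVneq => [<- | xy]; last by rewrite no_edge // mul0r.
  by rewrite -pi_x divff ?pi_neq0.
by apply/matrixP => i j; rewrite !mxE P_E (inj_eq (@pt_inj Om)) subrr.
Qed.

End Network.

Theorem corollary5p4 (R : realType) (V : countType) (c : V -> V -> R)
    (C_YT : R) (Om : {fset V}) (lam : seq R) (k : nat) :
  is_network c -> yang_type c C_YT ->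
  dirichlet_eigenvalues c Om lam ->
  (1 <= k)%N -> (k < #|` Om|)%N ->
  lam`_k.-1 <= 1 + C_YT ->
  lam`_k - lam`_k.-1 <=
    C_YT * (\sum_(i < k) (lam`_i - lambda_min c))
         / (\sum_(i < k) (1 - lam`_i)).
Proof.
move=> net yang eig k_ge1 k_lt.
have k_lt_size : (k < size lam)%N by rewrite (dirichlet_eigenvalues_size eig).
have [C_ge0 lam_le | C_lt0 _] := leP 0 C_YT.
  have lam_ge i : (i < k)%N -> lambda_min c <= lam`_i.
    move=> ik; apply/(dirichlet_eigenvalue_ge_lambda_min net).
    exact/(dirichlet_eigenvalues_root eig)/mem_nth/(ltn_trans ik).
  exact: yang_gap_bound eig.1 k_ge1 k_lt_size lam_ge
    (dirichlet_eigenvalues_sum_le net eig) C_ge0 lam_le (yang _ _ eig _ k_lt).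
have lam0 i : (i <= k)%N -> lam`_i = 0.
  move=> ik; have := dirichlet_eigenvalues_root eig (mem_nth 0 (leq_ltn_trans ik k_lt_size)).
  by rewrite (yang_type_nonpos_dirichlet_matrix0 net Om yang (ltW C_lt0)) => /char_poly0_root.
rewrite !lam0 ?leq_pred // subrr divr_ge0 //.
  apply: mulr_le0 (ltW C_lt0) (sumr_le0 _ _) => i _.
  by rewrite lam0 ?sub0r ?oppr_le0 ?lambda_min_ge0 // ltnW.
by apply: sumr_ge0 => i _; rewrite lam0 ?subr0 // ltnW.
Qed.
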